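(* Let $(G,s,t)$ be an oriented serial superedge with principal subgraphs $(G_1,s_1,t_1),\dots,(G_k,s_k,t_k)$ (so $s_1=s$, $t_i=s_{i+1}$, $t_k=t$), each $G_i$ non-parallel. For each $i$ let $\mathcal{T}_i$ contain exactly one spanning tree from each orbit of $\mathsf{ST}(G_i)$ under $\mathrm{Aut}_{\mathrm{or}}(G_i,s_i,t_i)$, and let $\mathcal{N}_i$ contain exactly one near tree from each orbit of $\mathsf{NT}(G_i)$ under $\mathrm{Aut}_{\mathrm{or}}(G_i,s_i,t_i)$. Then the set of all subgraphs $F_1\cup\dots\cup F_k$ such that, for some $j\in\{1,\dots,k\}$, $F_j\in\mathcal{N}_j$ and $F_i\in\mathcal{T}_i$ for all $i\neq j$, consists of near trees of $G$ and contains exactly one near tree from each orbit of $\mathsf{NT}(G)$ under $\mathrm{Aut}_{\mathrm{or}}(G,s,t)$.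
   Context: All graphs are finite, simple and undirected. An oriented series-parallel graph is a triple $(G,s,t)$ where $G$ is a graph and $s\neq t$ are vertices, defined recursively: (i) $G$ is a single edge with vertex set $\{s,t\}$; or (ii) (serial superedge) there are $k\ge 2$ oriented series-parallel graphs $(G_1,s_1,t_1),\dots,(G_k,s_k,t_k)$ with $s_1=s$, $t_k=t$, $t_i=s_{i+1}$ for $1\le i<k$, $V(G_i)\cap V(G_{i+1})=\{s_{i+1}\}$, $V(G_i)\cap V(G_j)=\emptyset$ for $|i-j|\ge2$, and $G=G_1\cup\dots\cup G_k$; or (iii) (parallel superedge) there are $k\ge2$ oriented series-parallel graphs $(G_1,s,t),\dots,(G_k,s,t)$ with $V(G_i)\cap V(G_j)=\{s,t\}$ for $i\neq j$ and $G=G_1\cup\dots\cup G_k$. The $G_i$ are the principal subgraphs. A graph is non-parallel if it is not a parallel superedge. For an oriented series-parallel graph $(H,u,v)$, $\mathrm{Aut}_{\mathrm{or}}(H,u,v)$ is the group of automorphisms of $H$ fixing $u$ and $v$, acting on subgraphs of $H$; $\mathsf{ST}(H)$ is the set of spanning trees of $H$; a near tree of $H$ is a spanning subgraph obtained from a spanning tree of $H$ by deleting one edge (equivalently an acyclic spanning subgraph with $|V(H)|-2$ edges), and $\mathsf{NT}(H)$ is the set of near trees. Two subgraphs $A,B$ are in the same orbit iff $A=\sigma(B)$ for some $\sigma$ in the group. *)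

From mathcomp Require Import all_boot fingroup perm.
Set Implicit Arguments. Unset Strict Implicit. Unset Printing Implicit Defensive.

Section SP.
Variable V : finType.

(* A finite simple graph on (a subset of) the vertex type V:
   a vertex set and a set of edges, each edge a set {x,y} of vertices. *)
Record graph := Graph { gV : {set V}; gE : {set {set V}} }.

Definition graph_union (G : graph) (k : nat) (Gs : nat -> graph) : Prop :=
  gV G = \bigcup_(i < k) gV (Gs i) /\ gE G = \bigcup_(i < k) gE (Gs i).

(* intersection conditions of a serial superedge with terminals
   xs 0, xs 1, ..., xs k  (G_i has terminals xs i, xs i.+1) *)
Definition serial_cond (k : nat) (Gs : nat -> graph) (xs : nat -> V) : Prop :=
  (forall i, i.+1 < k -> gV (Gs i) :&: gV (Gs i.+1) = [set xs i.+1]) /\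
  (forall i j, i < k -> j < k -> i.+1 < j -> gV (Gs i) :&: gV (Gs j) = set0).

(* intersection conditions of a parallel superedge; principal subgraphs
   are taken to be edge-disjoint *)
Definition parallel_cond (k : nat) (Gs : nat -> graph) (s t : V) : Prop :=
  forall i j, i < k -> j < k -> i != j ->
    gV (Gs i) :&: gV (Gs j) = [set s; t] /\ gE (Gs i) :&: gE (Gs j) = set0.

Inductive osp : graph -> V -> V -> Prop :=
| osp_edge (s t : V) : s != t -> osp (Graph [set s; t] [set [set s; t]]) s t
| osp_serial (G : graph) (s t : V) (k : nat) (Gs : nat -> graph) (xs : nat -> V) :
    2 <= k -> xs 0 = s -> xs k = t ->
    (forall i, i < k -> osp (Gs i) (xs i) (xs i.+1)) ->
    serial_cond k Gs xs -> graph_union G k Gs -> osp G s t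
| osp_parallel (G : graph) (s t : V) (k : nat) (Gs : nat -> graph) :
    2 <= k -> (forall i, i < k -> osp (Gs i) s t) ->
    parallel_cond k Gs s t -> graph_union G k Gs -> osp G s t.

Definition is_parallel (G : graph) (s t : V) : Prop :=
  exists (k : nat) (Gs : nat -> graph), 2 <= k /\
    (forall i, i < k -> osp (Gs i) s t) /\
    parallel_cond k Gs s t /\ graph_union G k Gs.

(* Spanning subgraphs of H are represented by their edge sets F. *)
Definition adj (F : {set {set V}}) : rel V := fun x y => [set x; y] \in F.

Definition acyclic (F : {set {set V}}) : Prop :=
  forall e, e \in F -> forall x y, e = [set x; y] -> x != y ->
    ~~ connect (adj (F :\ e)) x y.

Definition spanning_tree (H : graph) (F : {set {set V}}) : Prop :=
  F \subset gE H /\ acyclic F /\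
  (forall x y, x \in gV H -> y \in gV H -> connect (adj F) x y).

Definition near_tree (H : graph) (F : {set {set V}}) : Prop :=
  exists T e, spanning_tree H T /\ e \in T /\ F = T :\ e.

(* automorphisms of H fixing u and v (a permutation of V preserving V(H)
   and E(H); its values outside V(H) are irrelevant) *)
Definition aut_or (H : graph) (u v : V) (sigma : {perm V}) : Prop :=
  sigma @: gV H = gV H /\ [set sigma @: e | e : {set V} in gE H] = gE H /\
  sigma u = u /\ sigma v = v.

Definition act_sub (sigma : {perm V}) (F : {set {set V}}) : {set {set V}} :=
  [set sigma @: e | e : {set V} in F].

Definition same_orbit (H : graph) (u v : V) (A B : {set {set V}}) : Prop :=
  exists sigma, aut_or H u v sigma /\ A = act_sub sigma B.

Definition orbit_transversal (H : graph) (u v : V)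
    (S P : {set {set V}} -> Prop) : Prop :=
  (forall F, S F -> P F) /\
  (forall F, P F -> exists! X, S X /\ same_orbit H u v X F).

Definition combined (k : nat) (Ts Ns : nat -> {set {set V}} -> Prop)
    (X : {set {set V}}) : Prop :=
  exists j (F : nat -> {set {set V}}), j < k /\ Ns j (F j) /\
    (forall i, i < k -> i <> j -> Ts i (F i)) /\
    X = \bigcup_(i < k) F i.

End SP.

(* Every oriented series-parallel graph is connected and stays connected to each
   terminal when the other terminal is deleted.  In the serial superedge [G] this makes
   the cut vertex [xs i] separate the first [i] parts from the rest: deleting [xs i]
   leaves [xs 0] connected to exactly the other vertices of the first [i] parts,
   whereas deleting a vertex outside those parts leaves all of them connected to
   [xs 0].  An automorphism fixing [s] and [t] preserves the number of vertices
   reachable from [s] when a given vertex is deleted, so it fixes every cut vertex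
   and restricts to an automorphism of every part; conversely, automorphisms of
   the parts glue to one of [G].  As the parts are edge-disjoint and meet only in
   cut vertices, a near tree of [G] is exactly a union of a near tree of one part
   and spanning trees of all the others, and two near trees are in the same orbit
   iff their pieces are, part by part. *)

From mathcomp Require Import all_boot fingroup perm.
From mathcomp Require Import zify.
Set Implicit Arguments. Unset Strict Implicit. Unset Printing Implicit Defensive.

Lemma connect_homo (T1 T2 : finType) (e1 : rel T1) (e2 : rel T2) (f : T1 -> T2) :
  (forall x y, e1 x y -> connect e2 (f x) (f y)) ->
  forall x y, connect e1 x y -> connect e2 (f x) (f y).
Proof.
move=> He x y /connectP [p]; elim: p x => [|z p IHp] x /=; first by move=> _ ->.
by case/andP=> /He exz /IHp pz /pz; apply: connect_trans.
Qed.

Lemma connect_chain (T : finType) (e : rel T) (xs : nat -> T) n :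
  (forall m, m < n -> connect e (xs m) (xs m.+1)) ->
  forall m, m <= n -> connect e (xs 0) (xs m).
Proof.
move=> He; elim=> [|m IHm] mn; first exact: connect0.
exact: connect_trans (IHm (ltnW mn)) (He _ mn).
Qed.

Lemma bounded_choice (T : Type) (x0 : T) (R : nat -> T -> Prop) n :
  (forall i, i < n -> exists x, R i x) ->
  exists f : nat -> T, forall i, i < n -> R i (f i).
Proof.
elim: n => [|n IHn] HR; first by exists (fun=> x0).
have [f Hf] := IHn (fun i lt_in => HR i (ltnW lt_in)).
have [x Hx] := HR n (ltnSn n).
exists (fun i => if i == n then x else f i) => i; rewrite ltnS leq_eqVlt.
by case: eqP => [-> //|_ /= /Hf].
Qed.

Lemma imset_set2 (aT rT : finType) (f : aT -> rT) (x y : aT) :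
  f @: [set x; y] = [set f x; f y].
Proof. by rewrite imsetU1 imset_set1. Qed.

Lemma inj_imset_sub_eq (T : finType) (f : T -> T) (A : {set T}) :
  injective f -> f @: A \subset A -> f @: A = A.
Proof. by move=> injf sfA; apply/eqP; rewrite eqEcard sfA (card_imset _ injf) leqnn. Qed.

Section Graphs.
Variable V : finType.
Implicit Types (E F T : {set {set V}}) (H : graph V) (x y u v c : V).

Definition adj_avoid E c : rel V := fun x y => [&& adj E x y, x != c & y != c].

Lemma adj_sym E : symmetric (adj E).
Proof. by move=> x y; rewrite /adj setUC. Qed.

Lemma adj_avoid_sym E c : symmetric (adj_avoid E c).
Proof. by move=> x y; rewrite /adj_avoid adj_sym [(x != c) && _]andbC. Qed.

Lemma connect_adjC E : connect_sym (adj E).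
Proof. exact: sym_connect_sym (@adj_sym E). Qed.

Lemma connect_adjS E1 E2 x y : E1 \subset E2 ->
  connect (adj E1) x y -> connect (adj E2) x y.
Proof.
move=> sE12; apply: connect_sub x y => x y xy.
by apply: connect1; apply: (subsetP sE12).
Qed.

Lemma connect_adj_avoidS E1 E2 c x y : E1 \subset E2 ->
  connect (adj_avoid E1 c) x y -> connect (adj_avoid E2 c) x y.
Proof.
move=> sE12; apply: connect_sub x y => x y /and3P [xy xc yc].
by apply: connect1; rewrite /adj_avoid /adj (subsetP sE12 _ xy) xc yc.
Qed.

Record terminal_connected H u v : Prop := TerminalConnected {
  tc_neq : u != v;
  tc_src : u \in gV H;
  tc_snk : v \in gV H;
  tc_edge : forall e, e \in gE H ->
    exists x y, [/\ x != y, e = [set x; y], x \in gV H & y \in gV H];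
  tc_conn : forall x, x \in gV H -> connect (adj (gE H)) u x;
  tc_conn_src : forall x, x \in gV H -> x != v -> connect (adj_avoid (gE H) v) u x;
  tc_conn_snk : forall x, x \in gV H -> x != u -> connect (adj_avoid (gE H) u) v x }.

Lemma terminal_connected_sym H u v : terminal_connected H u v -> terminal_connected H v u.
Proof.
case=> uv uH vH Hedge Hconn Hsrc Hsnk; split; rewrite 1?eq_sym //.
by move=> x xH; apply: connect_trans (Hconn x xH); rewrite connect_adjC; apply: Hconn.
Qed.

Lemma terminal_connected_ends H u v x y : terminal_connected H u v ->
  [set x; y] \in gE H -> x \in gV H /\ y \in gV H.
Proof.
move=> HH /(tc_edge HH) [a [b [_ eq_ab aH bH]]].
have: x \in [set a; b] /\ y \in [set a; b] by rewrite -eq_ab !set21 set22.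
by rewrite !in_set2 => -[/orP [] /eqP -> /orP [] /eqP ->].
Qed.

Lemma near_tree_sub H F : near_tree H F -> F \subset gE H.
Proof. by case=> T [e [[sTH _] [_ ->]]]; apply: subset_trans sTH; apply: subD1set. Qed.

Lemma near_tree_not_spanning H u v F : terminal_connected H u v ->
  near_tree H F -> ~ spanning_tree H F.
Proof.
move=> HH [T [e [[sTH [acT _]] [eT ->]]]] [_ [_ connF]].
have [x [y [xy exy xH yH]]] := tc_edge HH (subsetP sTH _ eT).
by move: (acT e eT x y exy xy); rewrite connF.
Qed.

End Graphs.

Section Automorphisms.
Variable V : finType.
Implicit Types (F T : {set {set V}}) (H : graph V) (u v c x y : V) (s : {perm V}).
Local Open Scope group_scope.

Lemma imset_permK s (A : {set V}) : s^-1 @: (s @: A) = A.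
Proof. by rewrite -imset_comp (eq_imset _ (permK s)) imset_id. Qed.

Lemma act_subK s F : act_sub s^-1 (act_sub s F) = F.
Proof. by rewrite /act_sub -imset_comp (eq_imset _ (imset_permK s)) imset_id. Qed.

Lemma act_subD1 s F e : act_sub s (F :\ e) = act_sub s F :\ (s @: e).
Proof.
have inj_s := imset_inj (@perm_inj _ s).
apply/setP => e'; rewrite inE.
apply/imsetP/andP => [[f /setD1P [fe fF] ->]|[ne /imsetP [f fF ef]]].
  by rewrite inE (inj_eq inj_s) fe imset_f.
exists f => //; rewrite !inE fF andbT; apply: contraNneq ne => fe.
by rewrite inE ef fe.
Qed.

Lemma act_sub_bigcup s (I : finType) (Fs : I -> {set {set V}}) :
  act_sub s (\bigcup_i Fs i) = \bigcup_i act_sub s (Fs i).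
Proof.
apply/setP => e; apply/imsetP/bigcupP => [[f /bigcupP [i _ fi] ->]|[i _ /imsetP [f fi ->]]].
  by exists i => //; apply: imset_f.
by exists f => //; apply/bigcupP; exists i.
Qed.

Lemma aut_orV H u v s : aut_or H u v s -> aut_or H u v s^-1.
Proof.
case=> sV [sE [su sv]]; split; [|split; [|split]].
- by rewrite -{1}sV imset_permK.
- by rewrite -{1}sE; apply: act_subK.
- by rewrite -{1}su permK.
- by rewrite -{1}sv permK.
Qed.

Lemma aut_or_sym H u v s : aut_or H u v s -> aut_or H v u s.
Proof. by case=> ? [? [? ?]]. Qed.

Lemma aut_or_memV H u v s x : aut_or H u v s -> x \in gV H -> s x \in gV H.
Proof. by case=> sV _ xH; rewrite -sV imset_f. Qed.

Lemma aut_or_memE H u v s e : aut_or H u v s -> e \in gE H -> s @: e \in gE H.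
Proof. by case=> _ [sE _] eH; rewrite -sE imset_f. Qed.

Lemma adj_act_sub s F x y : adj F x y -> adj (act_sub s F) (s x) (s y).
Proof. by rewrite /adj -imset_set2 => xy; apply: imset_f. Qed.

Lemma connect_adj_act s F x y :
  connect (adj (act_sub s F)) (s x) (s y) = connect (adj F) x y.
Proof.
apply/idP/idP => [xy|]; last by apply: connect_homo => a b /(adj_act_sub s)/connect1.
rewrite -(permK s x) -(permK s y) -[F](act_subK s).
by apply: connect_homo xy => a b /(adj_act_sub s^-1)/connect1.
Qed.

Lemma connect_adj_avoid_aut H u v s c x y : aut_or H u v s ->
  connect (adj_avoid (gE H) c) x y -> connect (adj_avoid (gE H) (s c)) (s x) (s y).
Proof.
move=> Hs; apply: connect_homo => a b /and3P [ab ac bc]; apply: connect1.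
by rewrite /adj_avoid /adj -imset_set2 (aut_or_memE Hs ab) !(inj_eq perm_inj) ac bc.
Qed.

Lemma acyclicS F1 F2 : F1 \subset F2 -> acyclic F2 -> acyclic F1.
Proof.
move=> sF12 acF2 e eF1 x y exy xy.
by apply: contraNN (acF2 e (subsetP sF12 _ eF1) x y exy xy); apply/connect_adjS/setSD.
Qed.

Lemma acyclic_act s F : acyclic F -> acyclic (act_sub s F).
Proof.
move=> acF _ /imsetP [e eF ->] x y exy xy.
have e_pre : e = [set s^-1 x; s^-1 y] by rewrite -imset_set2 -exy imset_permK.
rewrite -(permKV s x) -(permKV s y) -act_subD1 connect_adj_act.
by apply: acF e_pre _ => //; rewrite (inj_eq perm_inj).
Qed.

Lemma spanning_tree_act H u v s T : aut_or H u v s -> spanning_tree H T ->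
  spanning_tree H (act_sub s T).
Proof.
move=> Hs [sTH [acT connT]]; split; [|split; first exact: acyclic_act].
  by apply/subsetP => _ /imsetP [e eT ->]; apply: aut_or_memE Hs (subsetP sTH _ eT).
move=> x y xH yH; have Hs' := aut_orV Hs.
by rewrite -(permKV s x) -(permKV s y) connect_adj_act; apply: connT; apply: aut_or_memV Hs' _.
Qed.

End Automorphisms.

Lemma transversal_uniq (V : finType) (H : graph V) u v (S P : {set {set V}} -> Prop) F X1 X2 :
  orbit_transversal H u v S P -> P F ->
  S X1 -> same_orbit H u v X1 F -> S X2 -> same_orbit H u v X2 F -> X1 = X2.
Proof.
move=> [_ HSP] PF SX1 X1F SX2 X2F; have [X0 [_ X0uniq]] := HSP F PF.
by rewrite -(X0uniq X1 (conj SX1 X1F)) (X0uniq X2 (conj SX2 X2F)).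
Qed.

Section Union.
Variables (V : finType) (G : graph V) (k : nat) (Gs : nat -> graph V).
Hypothesis HG : graph_union G k Gs.

Lemma vertex_part x : x \in gV G -> exists2 i, i < k & x \in gV (Gs i).
Proof. by case: HG => -> _ /bigcupP [i _ xi]; exists i. Qed.

Lemma edge_part e : e \in gE G -> exists2 i, i < k & e \in gE (Gs i).
Proof. by case: HG => _ -> /bigcupP [i _ ei]; exists i. Qed.

Lemma part_vertex i x : i < k -> x \in gV (Gs i) -> x \in gV G.
Proof. by case: HG => -> _ ik xi; apply/bigcupP; exists (Ordinal ik). Qed.

Lemma part_edges i : i < k -> gE (Gs i) \subset gE G.
Proof. by case: HG => _ -> ik; apply/subsetP => e ei; apply/bigcupP; exists (Ordinal ik). Qed.

Lemma bigcup_setI_part (F : {set {set V}}) :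
  F \subset gE G -> F = \bigcup_(i < k) (F :&: gE (Gs i)).
Proof.
move=> sFG; apply/setP => e; apply/idP/bigcupP => [eF|[i _ /setIP []//]].
by have [i ik ei] := edge_part (subsetP sFG _ eF); exists (Ordinal ik); rewrite // inE eF.
Qed.

Lemma terminal_connected_parallel u v : 0 < k ->
  (forall i, i < k -> terminal_connected (Gs i) u v) -> terminal_connected G u v.
Proof.
move=> k0 Htc; have H0 := Htc 0 k0.
split; first exact: tc_neq H0.
- exact: part_vertex k0 (tc_src H0).
- exact: part_vertex k0 (tc_snk H0).
- move=> e /edge_part [i ik /(tc_edge (Htc i ik)) [x [y [xy exy xi yi]]]].
  by exists x, y; split => //; apply: part_vertex ik _.
- move=> x /vertex_part [i ik xi].
  exact: connect_adjS (part_edges ik) (tc_conn (Htc i ik) xi).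
- move=> x /vertex_part [i ik xi] xv.
  exact: connect_adj_avoidS (part_edges ik) (tc_conn_src (Htc i ik) xi xv).
- move=> x /vertex_part [i ik xi] xu.
  exact: connect_adj_avoidS (part_edges ik) (tc_conn_snk (Htc i ik) xi xu).
Qed.

End Union.

Section Serial.
Variables (V : finType) (G : graph V) (k : nat) (Gs : nat -> graph V) (xs : nat -> V).
Hypotheses (Htc : forall i, i < k -> terminal_connected (Gs i) (xs i) (xs i.+1))
  (Hser : serial_cond k Gs xs) (HG : graph_union G k Gs).

Lemma serial_meet i l v : i < l -> l < k -> v \in gV (Gs i) -> v \in gV (Gs l) ->
  l = i.+1 /\ v = xs l.
Proof.
case: Hser => Hnext Hfar il lk vi vl; case: (ltnP i.+1 l) => [il1|li1].
  by move/setP/(_ v): (Hfar i l (ltn_trans il lk) lk il1); rewrite inE vi vl inE.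
have el : l = i.+1 by apply/eqP; rewrite eqn_leq li1 il.
subst l; split => //.
by move/setP/(_ v): (Hnext i lk); rewrite !inE vi vl => /esym/eqP.
Qed.

Lemma cut_src i : i < k -> xs i \in gV (Gs i).
Proof. by move/Htc/tc_src. Qed.

Lemma cut_snk i : i < k -> xs i.+1 \in gV (Gs i).
Proof. by move/Htc/tc_snk. Qed.

Lemma cut_snk_pred i : 0 < i <= k -> xs i \in gV (Gs i.-1).
Proof. by case/andP=> i0 ik; have := @cut_snk i.-1; rewrite prednK //; apply; lia. Qed.

Lemma cut_notin p i : p.+1 < i -> i <= k -> xs i \notin gV (Gs p).
Proof.
move=> pi ik; apply/negP => xp.
have xi1 : xs i \in gV (Gs i.-1) by apply: cut_snk_pred; lia.
have [_ xi] := serial_meet (ltac:(lia) : p < i.-1) (ltac:(lia)) xp xi1.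
by move: (tc_neq (Htc (ltac:(lia) : i.-1 < k))); rewrite prednK ?xi ?eqxx //; lia.
Qed.

Lemma cut_neq a b : a < b -> b <= k -> xs a != xs b.
Proof.
move=> ab bk; case: (ltnP a.+1 b) => [a1b|ba1].
  by apply: contraNneq (cut_notin a1b bk) => <-; apply: cut_src; lia.
have -> : b = a.+1 by lia.
by apply: tc_neq (Htc _); lia.
Qed.

Lemma part_edge_ends i x y : i < k -> [set x; y] \in gE (Gs i) ->
  x \in gV (Gs i) /\ y \in gV (Gs i).
Proof. by move/Htc/terminal_connected_ends; apply. Qed.

Lemma part_edge_sub i e : i < k -> e \in gE (Gs i) -> {subset e <= gV (Gs i)}.
Proof. by move=> ik /(tc_edge (Htc ik)) [x [y [_ -> xi yi]]] z /set2P [] ->. Qed.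

Lemma part_meet2 i l x y : i < k -> l < k -> x != y ->
  x \in gV (Gs i) -> y \in gV (Gs i) -> x \in gV (Gs l) -> y \in gV (Gs l) -> i = l.
Proof.
move=> ik lk xy xi yi xl yl; case: (ltngtP i l) => // [il|li].
- have [_ ex] := serial_meet il lk xi xl; have [_ ey] := serial_meet il lk yi yl.
  by rewrite ex ey eqxx in xy.
- have [_ ex] := serial_meet li ik xl xi; have [_ ey] := serial_meet li ik yl yi.
  by rewrite ex ey eqxx in xy.
Qed.

Lemma part_edge_uniq i l e : i < k -> l < k ->
  e \in gE (Gs i) -> e \in gE (Gs l) -> i = l.
Proof.
move=> ik lk ei el; have [x [y [xy exy xi yi]]] := tc_edge (Htc ik) ei.
rewrite exy in el; have [xl yl] := part_edge_ends lk el.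
exact: (part_meet2 ik lk xy xi yi xl yl).
Qed.

Lemma part_edge_mem i x y : i < k -> x != y -> x \in gV (Gs i) -> y \in gV (Gs i) ->
  [set x; y] \in gE G -> [set x; y] \in gE (Gs i).
Proof.
move=> ik xy xi yi /(edge_part HG) [m mk xym]; have [xm ym] := part_edge_ends mk xym.
by rewrite (part_meet2 ik mk xy xi yi xm ym).
Qed.

Lemma connect_part_avoid i c x y : i < k -> c \notin gV (Gs i) ->
  connect (adj (gE (Gs i))) x y -> connect (adj_avoid (gE G) c) x y.
Proof.
move=> ik ci; apply: connect_homo => a b ab; apply: connect1.
have [ai bi] := part_edge_ends ik ab.
rewrite /adj_avoid /adj (subsetP (part_edges HG ik) _ ab).
by rewrite /=; apply/andP; split; apply/eqP => ec; rewrite -ec ?ai ?bi in ci.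
Qed.

Definition vprefix i : {set V} := \bigcup_(m < i) gV (Gs m).

Lemma vprefixP i x : reflect (exists2 m, m < i & x \in gV (Gs m)) (x \in vprefix i).
Proof.
by apply: (iffP bigcupP) => [[m _ xm]|[m mi xm]]; [exists m | exists (Ordinal mi)].
Qed.

Lemma mem_vprefix m i x : m < i -> x \in gV (Gs m) -> x \in vprefix i.
Proof. by move=> mi xm; apply/vprefixP; exists m. Qed.

Lemma vprefix_k : gV G = vprefix k.
Proof. by case: HG. Qed.

Definition reach c : {set V} := [set x | connect (adj_avoid (gE G) c) (xs 0) x].

Lemma reach_part c m x : m < k -> (forall p, p < m -> c \notin gV (Gs p)) ->
  x \in gV (Gs m) -> c \notin gV (Gs m) \/ (c = xs m.+1 /\ x != c) -> x \in reach c.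
Proof.
move=> mk cm xm cxm; rewrite inE.
have reach_m : connect (adj_avoid (gE G) c) (xs 0) (xs m).
  apply: connect_chain (leqnn m) => p pm; have pk : p < k by lia.
  exact: connect_part_avoid pk (cm p pm) (tc_conn (Htc pk) (cut_snk pk)).
apply: connect_trans reach_m _; case: cxm => [cxm|[-> xc]].
  exact: connect_part_avoid mk cxm (tc_conn (Htc mk) xm).
exact: connect_adj_avoidS (part_edges HG mk) (tc_conn_src (Htc mk) xm xc).
Qed.

Lemma vprefix_sub_reach c i : i <= k -> c \notin vprefix i -> vprefix i \subset reach c.
Proof.
move=> ik ci; apply/subsetP => x /vprefixP [m mi xm].
apply: reach_part xm _ => [|p pm|]; first lia.
  by apply: contra ci; apply: mem_vprefix; lia.
by left; apply: contra ci; apply: mem_vprefix.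
Qed.

Lemma reach_cut i : 0 < i <= k -> reach (xs i) = vprefix i :\ xs i.
Proof.
case/andP=> i0 ik; apply/setP => x; rewrite in_setD1 andbC; apply/idP/andP => [|[]].
  pose P := [pred z | (z \in vprefix i) && (z != xs i)].
  have closedP : closed (adj_avoid (gE G) (xs i)) P.
    apply: intro_closed => [|a b /and3P [ab _ bi] /andP [ai ani]].
      exact: sym_connect_sym (@adj_avoid_sym _ _ _).
    rewrite inE bi andbT; have [m mk abm] := edge_part HG ab.
    have [am bm] := part_edge_ends mk abm.
    case: (ltnP m i) => [mi|im]; first exact: mem_vprefix mi bm.
    have [p pi ap] := vprefixP _ _ ai.
    have [mp ea] := serial_meet (ltac:(lia) : p < m) mk ap am.
    by move: ani; rewrite ea (_ : m = i) ?eqxx //; lia.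
  rewrite inE => reach_x; have := closed_connect closedP reach_x.
  by rewrite !inE cut_neq ?(mem_vprefix i0 (cut_src _)) //; [move/esym/andP | lia].
move=> /vprefixP [m mi xm] xi; apply: reach_part xm _ => [|p pm|]; first lia.
  by apply: cut_notin; lia.
case: (ltnP m.+1 i) => [m1i|im1]; first by left; apply: cut_notin.
by right; split => //; congr xs; lia.
Qed.

Lemma connect_serial x : x \in gV G -> connect (adj (gE G)) (xs 0) x.
Proof.
move=> /(vertex_part HG) [m mk xm].
apply: connect_trans (connect_adjS (part_edges HG mk) (tc_conn (Htc mk) xm)).
apply: connect_chain (leqnn m) => p pm; have pk : p < k by lia.
exact: connect_adjS (part_edges HG pk) (tc_conn (Htc pk) (cut_snk pk)).
Qed.

Lemma connect_serial_avoid_snk x : 0 < k -> x \in gV G -> x != xs k ->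
  connect (adj_avoid (gE G) (xs k)) (xs 0) x.
Proof.
move=> k0 xG xk; have := reach_cut (i := k); rewrite k0 leqnn => /(_ isT)/setP/(_ x).
by rewrite !inE xk -vprefix_k xG.
Qed.

End Serial.

Lemma bigcup_ord_rev (T : finType) n (A : nat -> {set T}) :
  \bigcup_(i < n) A i = \bigcup_(i < n) A (n.-1 - i).
Proof.
rewrite (reindex_inj rev_ord_inj) /=; apply: eq_bigr => i _.
by congr A; have := ltn_ord i; lia.
Qed.

Lemma serial_rev (V : finType) (G : graph V) k Gs xs :
  (forall i, i < k -> terminal_connected (Gs i) (xs i) (xs i.+1)) ->
  serial_cond k Gs xs -> graph_union G k Gs ->
  let Gs' i := Gs (k.-1 - i) in let xs' i := xs (k - i) in
  [/\ forall i, i < k -> terminal_connected (Gs' i) (xs' i) (xs' i.+1),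
      serial_cond k Gs' xs' & graph_union G k Gs'].
Proof.
move=> Htc [Hnext Hfar] [HV HE] Gs' xs'; split.
- move=> i ik; rewrite /Gs' /xs' (_ : k - i.+1 = k.-1 - i); last by lia.
  have := terminal_connected_sym (Htc (k.-1 - i) (ltac:(lia))).
  by rewrite (_ : (k.-1 - i).+1 = k - i) //; lia.
- split => [i ik|i j ik jk ij]; rewrite /Gs' /xs' setIC.
    have e1 : k.-1 - i = (k.-1 - i.+1).+1 by lia.
    have e2 : k - i.+1 = (k.-1 - i.+1).+1 by lia.
    by rewrite e1 e2 Hnext //; lia.
  by apply: Hfar; lia.
- split; rewrite /Gs' ?HV ?HE.
    exact: (bigcup_ord_rev k (fun i => gV (Gs i))).
  exact: (bigcup_ord_rev k (fun i => gE (Gs i))).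
Qed.

Lemma terminal_connected_serial (V : finType) (G : graph V) k Gs xs : 0 < k ->
  (forall i, i < k -> terminal_connected (Gs i) (xs i) (xs i.+1)) ->
  serial_cond k Gs xs -> graph_union G k Gs -> terminal_connected G (xs 0) (xs k).
Proof.
move=> k0 Htc Hser HG; split.
- exact: (cut_neq Htc Hser k0 (leqnn k)).
- exact: (part_vertex HG k0 (cut_src Htc k0)).
- have kk : 0 < k <= k by rewrite k0 leqnn.
  exact: (part_vertex HG (ltac:(lia) : k.-1 < k) (cut_snk_pred Htc kk)).
- move=> e /(edge_part HG) [i ik /(tc_edge (Htc i ik)) [x [y [xy exy xi yi]]]].
  by exists x, y; split => //; apply: (part_vertex HG ik).
- exact: (connect_serial Htc HG).
- by move=> x; apply: (connect_serial_avoid_snk Htc Hser HG k0).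
- have [Htc' Hser' HG'] := serial_rev Htc Hser HG.
  move=> x; have := connect_serial_avoid_snk Htc' Hser' HG' (x := x) k0.
  by rewrite subn0 subnn.
Qed.

Lemma osp_terminal_connected (V : finType) (H : graph V) u v :
  osp H u v -> terminal_connected H u v.
Proof.
elim=> {H u v} [u v uv|G s t k Gs xs k2 <- <- _ Htc Hser HG|G s t k Gs k2 _ Htc _ HG].
- split => //=; rewrite ?set21 ?set22 //.
  + by move=> e /set1P ->; exists u, v; rewrite set21 set22.
  + by move=> x /set2P [] ->; [apply: connect0 | apply/connect1/set11].
  + by move=> x /set2P [] ->; rewrite ?eqxx // => _; apply: connect0.
  + by move=> x /set2P [] ->; rewrite ?eqxx // => _; apply: connect0.
- exact: terminal_connected_serial (ltnW k2) Htc Hser HG.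
- exact: (terminal_connected_parallel HG (ltnW k2) Htc).
Qed.

Section CutVertices.
Variables (V : finType) (G : graph V) (k : nat) (Gs : nat -> graph V) (xs : nat -> V).
Hypotheses (Htc : forall i, i < k -> terminal_connected (Gs i) (xs i) (xs i.+1))
  (Hser : serial_cond k Gs xs) (HG : graph_union G k Gs).

Lemma reach_act (s : {perm V}) c x : aut_or G (xs 0) (xs k) s ->
  x \in reach G xs c -> s x \in reach G xs (s c).
Proof.
move=> Hs; rewrite !inE => /(connect_adj_avoid_aut Hs).
by case: Hs => _ [_ [-> _]].
Qed.

Variable s : {perm V}.
Hypothesis Hs : aut_or G (xs 0) (xs k) s.

Lemma reach_aut c : reach G xs (s c) = s @: reach G xs c.
Proof.
apply/setP => y; apply/idP/imsetP => [ry|[x rx ->]]; last exact: reach_act Hs rx.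
exists ((s^-1)%g y); last by rewrite permKV.
by have := reach_act (aut_orV Hs) ry; rewrite permK.
Qed.

(* Otherwise [reach (s (xs i))] would contain all of [vprefix i], while its preimage
   [reach (xs i)] misses [xs i]. *)
Lemma aut_cut_vprefix i : 0 < i <= k -> s (xs i) \in vprefix Gs i.
Proof.
move=> i0k; apply: contraT => sxi.
have sub1 := vprefix_sub_reach Htc HG (ltac:(lia) : i <= k) sxi.
have xi := mem_vprefix (ltac:(lia) : i.-1 < i) (cut_snk_pred Htc i0k).
have := subset_leq_card sub1; rewrite reach_aut (card_imset _ perm_inj).
by rewrite (reach_cut Htc Hser HG i0k) (cardsD1 (xs i)) xi ltnn.
Qed.

Hypothesis Hfix : forall j, j <= k -> s (xs j) = xs j.

Lemma aut_part_vprefix i v : i < k -> v \in gV (Gs i) -> s v \in vprefix Gs i.+1.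
Proof.
move=> ik vi; case: (eqVneq v (xs i.+1)) => [->|vx].
  by rewrite Hfix //; apply: mem_vprefix (ltnSn i) (cut_snk Htc ik).
have i1 : 0 < i.+1 <= k by rewrite ltnS ik.
have : v \in reach G xs (xs i.+1).
  by rewrite (reach_cut Htc Hser HG i1) in_setD1 vx (mem_vprefix (ltnSn i) vi).
by move/(reach_act Hs); rewrite Hfix // (reach_cut Htc Hser HG i1) => /setD1P [].
Qed.

End CutVertices.

Section Restriction.
Variables (V : finType) (G : graph V) (k : nat) (Gs : nat -> graph V) (xs : nat -> V).
Hypotheses (Htc : forall i, i < k -> terminal_connected (Gs i) (xs i) (xs i.+1))
  (Hser : serial_cond k Gs xs) (HG : graph_union G k Gs).
Variable s : {perm V}.
Hypothesis Hs : aut_or G (xs 0) (xs k) s.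

Let Hs_rev : aut_or G (xs (k - 0)) (xs (k - k)) s.
Proof. by rewrite subn0 subnn; apply: aut_or_sym. Qed.

Lemma aut_fix_cut i : i <= k -> s (xs i) = xs i.
Proof.
move=> ik; case: (posnP i) => [->|i0]; first by case: Hs => _ [_ []].
case: (eqVneq i k) => [->|ink]; first by case: Hs => _ [_ []].
have [Htc' Hser' HG'] := serial_rev Htc Hser HG.
have /vprefixP [p pi sp] := aut_cut_vprefix Htc Hser HG Hs (ltac:(lia) : 0 < i <= k).
have := aut_cut_vprefix Htc' Hser' HG' Hs_rev (ltac:(lia) : 0 < k - i <= k).
rewrite subKn // => /vprefixP [m mi sm].
have [ml ->] := serial_meet Hser (ltac:(lia) : p < k.-1 - m) (ltac:(lia)) sp sm.
by congr xs; lia.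
Qed.

Lemma aut_part_vertex i v : i < k -> v \in gV (Gs i) -> s v \in gV (Gs i).
Proof.
move=> ik vi; have [Htc' Hser' HG'] := serial_rev Htc Hser HG.
have Hfix' j : j <= k -> s (xs (k - j)) = xs (k - j) by move=> jk; apply: aut_fix_cut; lia.
have /vprefixP [p pi sp] := aut_part_vprefix Htc Hser HG Hs aut_fix_cut ik vi.
have vi' : v \in gV (Gs (k.-1 - (k.-1 - i))) by rewrite subKn //; lia.
have /vprefixP [m mi sm] :=
  aut_part_vprefix Htc' Hser' HG' Hs_rev Hfix' (i := k.-1 - i) (ltac:(lia)) vi'.
case: (ltnP p i) => [lt_pi|le_ip]; last by rewrite (_ : i = p) //; lia.
case: (ltnP i (k.-1 - m)) => [lt_im|le_mi]; last by rewrite (_ : i = k.-1 - m) //; lia.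
by have [] := serial_meet Hser (ltac:(lia) : p < k.-1 - m) (ltac:(lia)) sp sm; lia.
Qed.

Lemma aut_restrict i : i < k -> aut_or (Gs i) (xs i) (xs i.+1) s.
Proof.
move=> ik; split; [|split; [|split; apply: aut_fix_cut; lia]].
  apply: inj_imset_sub_eq perm_inj _; apply/subsetP => _ /imsetP [v vi ->].
  exact: aut_part_vertex.
apply: inj_imset_sub_eq (imset_inj perm_inj) _; apply/subsetP => _ /imsetP [e ei ->].
have [x [y [xy exy xi yi]]] := tc_edge (Htc ik) ei.
have eG := aut_or_memE Hs (subsetP (part_edges HG ik) _ ei).
rewrite exy imset_set2 in eG *.
by apply: (part_edge_mem Htc Hser HG ik); rewrite ?(inj_eq perm_inj) ?aut_part_vertex.
Qed.

End Restriction.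

Section SpanningTrees.
Variables (V : finType) (G : graph V) (k : nat) (Gs : nat -> graph V) (xs : nat -> V).
Hypotheses (Htc : forall i, i < k -> terminal_connected (Gs i) (xs i) (xs i.+1))
  (Hser : serial_cond k Gs xs) (HG : graph_union G k Gs).

(* Contracts every edge of [G] outside [Gs l] to a single vertex, so that paths of
   [G] are mapped to walks in [Gs l]. *)
Definition retract l v :=
  if v \in gV (Gs l) then v else if v \in vprefix Gs l then xs l else xs l.+1.

Lemma retract_id l v : v \in gV (Gs l) -> retract l v = v.
Proof. by rewrite /retract => ->. Qed.

Lemma retract_part l m v : l < k -> m < k -> m != l -> v \in gV (Gs m) ->
  retract l v = if m < l then xs l else xs l.+1.
Proof.
move=> lk mk ml vm; rewrite /retract; case: ifP => [vl|_].
  case: (ltngtP m l) => [lt_ml|lt_lm|eq_ml]; last by rewrite eq_ml eqxx in ml.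
    by have [_ ->] := serial_meet Hser lt_ml lk vm vl.
  by have [-> ->] := serial_meet Hser lt_lm mk vl vm.
case: ifP => [/vprefixP [p pl vp]|vNl].
  case: (ltnP m l) => // le_lm.
  by have [] := serial_meet Hser (ltac:(lia) : p < m) mk vp vm; lia.
by case: (ltnP m l) => // lt_ml; rewrite (mem_vprefix lt_ml vm) in vNl.
Qed.

Lemma connect_retract l (T Tl : {set {set V}}) x y : l < k -> T \subset gE G ->
  {subset T :&: gE (Gs l) <= Tl} -> x \in gV (Gs l) -> y \in gV (Gs l) ->
  connect (adj T) x y -> connect (adj Tl) x y.
Proof.
move=> lk sTG sTl xl yl Txy; rewrite -(retract_id xl) -(retract_id yl).
apply: connect_homo Txy => a b ab.
have [m mk abm] := edge_part HG (subsetP sTG _ ab).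
have [am bm] := part_edge_ends Htc mk abm.
case: (eqVneq m l) => [eml|ml].
  subst m; rewrite !retract_id //.
  by apply: connect1; apply: sTl; apply/setIP; split.
by rewrite (retract_part lk mk ml am) (retract_part lk mk ml bm).
Qed.

Lemma spanning_tree_bigcup (Tr : nat -> {set {set V}}) :
  (forall i, i < k -> spanning_tree (Gs i) (Tr i)) ->
  spanning_tree G (\bigcup_(i < k) Tr i).
Proof.
move=> HT; have sTrG i : i < k -> Tr i \subset gE G.
  by move=> ik; case: (HT i ik) => sT _; apply: subset_trans sT (part_edges HG ik).
have sTrU i : i < k -> Tr i \subset \bigcup_(j < k) Tr j.
  by move=> ik; apply: (bigcup_sup (Ordinal ik)).
have sUG : \bigcup_(i < k) Tr i \subset gE G.
  by apply/bigcupsP => i _; apply: sTrG.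
split; [exact: sUG | split].
- move=> e /bigcupP [l _ el] x y exy xy; have lk := ltn_ord l.
  have [sTl [acTl _]] := HT l lk.
  have [xl yl] : x \in gV (Gs l) /\ y \in gV (Gs l).
    by apply: (part_edge_ends Htc lk); rewrite -exy (subsetP sTl).
  apply: contraNN (acTl e el x y exy xy); apply: (connect_retract lk _ _ xl yl).
    by apply: subset_trans sUG; apply: subD1set.
  move=> f /setIP [/setD1P [fe /bigcupP [m _ fm]] fl]; rewrite in_setD1 fe.
  have [sTm _] := HT m (ltn_ord m).
  by rewrite -(part_edge_uniq Htc Hser (ltn_ord m) lk (subsetP sTm _ fm) fl).
- have conn0 x : x \in gV G -> connect (adj (\bigcup_(i < k) Tr i)) (xs 0) x.
    move=> /(vertex_part HG) [m mk xm].
    have connT i y z : i < k -> y \in gV (Gs i) -> z \in gV (Gs i) ->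
        connect (adj (\bigcup_(j < k) Tr j)) y z.
      move=> ik yi zi; case: (HT i ik) => _ [_ connTi].
      exact: connect_adjS (sTrU i ik) (connTi _ _ yi zi).
    apply: connect_trans (connT m _ _ mk (cut_src Htc mk) xm).
    apply: connect_chain (leqnn m) => p pm; have pk : p < k by lia.
    exact: connT p _ _ pk (cut_src Htc pk) (cut_snk Htc pk).
  by move=> x y xG yG; apply: connect_trans (conn0 y yG); rewrite connect_adjC; apply: conn0.
Qed.

Lemma spanning_tree_restrict (T : {set {set V}}) l : l < k ->
  spanning_tree G T -> spanning_tree (Gs l) (T :&: gE (Gs l)).
Proof.
move=> lk [sTG [acT connT]]; split; [exact: subsetIr | split].
  exact: acyclicS (subsetIl _ _) acT.
move=> x y xl yl; apply: (connect_retract lk sTG (fun e eTl => eTl) xl yl).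
exact: connT (part_vertex HG lk xl) (part_vertex HG lk yl).
Qed.

End SpanningTrees.

Section Gluing.
Variables (V : finType) (G : graph V) (k : nat) (Gs : nat -> graph V) (xs : nat -> V).
Hypotheses (Htc : forall i, i < k -> terminal_connected (Gs i) (xs i) (xs i.+1))
  (Hser : serial_cond k Gs xs) (HG : graph_union G k Gs).

Definition glue (ss : nat -> {perm V}) v :=
  if [pick i : 'I_k | v \in gV (Gs i)] is Some i then ss i v else v.

Section Family.
Variable ss : nat -> {perm V}.
Hypothesis Hss : forall i, i < k -> aut_or (Gs i) (xs i) (xs i.+1) (ss i).

Lemma glue_part i v : i < k -> v \in gV (Gs i) -> glue ss v = ss i v.
Proof.
move=> ik vi; rewrite /glue; case: pickP => [m /= vm|/(_ (Ordinal ik))]; last by rewrite vi.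
have [fix_m fix_m1] : ss m (xs m) = xs m /\ ss m (xs m.+1) = xs m.+1.
  by case: (Hss (ltn_ord m)) => _ [_].
have [fix_i fix_i1] : ss i (xs i) = xs i /\ ss i (xs i.+1) = xs i.+1.
  by case: (Hss ik) => _ [_].
case: (ltngtP m i) => [lt_mi|lt_im|-> //].
  by have [ei ->] := serial_meet Hser lt_mi ik vm vi; rewrite fix_i ei fix_m1.
by have [em ->] := serial_meet Hser lt_im (ltn_ord m) vi vm; rewrite fix_m em fix_i1.
Qed.

Lemma glue_out v : v \notin gV G -> glue ss v = v.
Proof.
move=> vNG; rewrite /glue; case: pickP => [m /= vm|//].
by rewrite (part_vertex HG (ltn_ord m) vm) in vNG.
Qed.

End Family.

Lemma glueK ss : (forall i, i < k -> aut_or (Gs i) (xs i) (xs i.+1) (ss i)) ->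
  cancel (glue ss) (glue (fun i => ((ss i)^-1)%g)).
Proof.
move=> Hss v; have Hss' i ik := aut_orV (Hss i ik).
case: (boolP (v \in gV G)) => [/(vertex_part HG) [i ik vi]|vNG]; last by rewrite !glue_out.
by rewrite (glue_part Hss ik vi) (glue_part Hss' ik (aut_or_memV (Hss i ik) vi)) permK.
Qed.

Lemma aut_glue ss : 0 < k ->
  (forall i, i < k -> aut_or (Gs i) (xs i) (xs i.+1) (ss i)) ->
  exists s : {perm V}, aut_or G (xs 0) (xs k) s /\
    forall i v, i < k -> v \in gV (Gs i) -> s v = ss i v.
Proof.
move=> k0 Hss; pose s := perm (can_inj (glueK Hss)).
have s_part i v : i < k -> v \in gV (Gs i) -> s v = ss i v.
  by move=> ik vi; rewrite permE (glue_part Hss ik vi).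
exists s; split => //; split; [|split; [|split]].
- apply: inj_imset_sub_eq perm_inj _.
  apply/subsetP => _ /imsetP [v /(vertex_part HG) [i ik vi] ->].
  by rewrite (s_part i v ik vi); apply: (part_vertex HG ik); apply: aut_or_memV (Hss i ik) vi.
- apply: inj_imset_sub_eq (imset_inj perm_inj) _.
  apply/subsetP => _ /imsetP [e /(edge_part HG) [i ik ei] ->].
  rewrite (eq_in_imset (g := ss i)) => [|v /(part_edge_sub Htc ik ei) vi]; last exact: s_part.
  exact: subsetP (part_edges HG ik) _ (aut_or_memE (Hss i ik) ei).
- by rewrite (s_part 0 _ k0 (cut_src Htc k0)); case: (Hss 0 k0) => _ [_ []].
- have kk : 0 < k <= k by rewrite k0 leqnn.
  rewrite (s_part k.-1 _ (ltac:(lia)) (cut_snk_pred Htc kk)).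
  by case: (Hss k.-1 (ltac:(lia))) => _ [_ []]; rewrite prednK.
Qed.

End Gluing.

Section NearTrees.
Variables (V : finType) (G : graph V) (k : nat) (Gs : nat -> graph V) (xs : nat -> V).
Hypotheses (Htc : forall i, i < k -> terminal_connected (Gs i) (xs i) (xs i.+1))
  (Hser : serial_cond k Gs xs) (HG : graph_union G k Gs).
Implicit Types (F T : {set {set V}}) (s : {perm V}).

Definition tree_piece j i : {set {set V}} -> Prop :=
  if i == j then near_tree (Gs i) else spanning_tree (Gs i).

Lemma setI_bigcup_part (Fs : nat -> {set {set V}}) i :
  (forall l, l < k -> Fs l \subset gE (Gs l)) -> i < k ->
  (\bigcup_(l < k) Fs l) :&: gE (Gs i) = Fs i.
Proof.
move=> sFs ik; apply/setP => e; rewrite inE; apply/andP/idP => [[/bigcupP [l _ el] ei]|ei].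
  by rewrite (part_edge_uniq Htc Hser ik (ltn_ord l) ei (subsetP (sFs l (ltn_ord l)) _ el)).
by split; [apply/bigcupP; exists (Ordinal ik) | apply: (subsetP (sFs i ik))].
Qed.

Lemma act_sub_setI_part s F i : aut_or G (xs 0) (xs k) s -> F \subset gE G -> i < k ->
  act_sub s F :&: gE (Gs i) = act_sub s (F :&: gE (Gs i)).
Proof.
move=> Hs sFG ik; apply/setP => e; rewrite inE.
apply/andP/imsetP => [[/imsetP [f fF ->] sfi]|[f /setIP [fF fi] ->]].
  have [m mk fm] := edge_part HG (subsetP sFG _ fF).
  have sfm := aut_or_memE (aut_restrict Htc Hser HG Hs mk) fm.
  by exists f => //; rewrite inE fF (part_edge_uniq Htc Hser ik mk sfi sfm).
by split; [apply: imset_f | apply: aut_or_memE (aut_restrict Htc Hser HG Hs ik) fi].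
Qed.

Lemma act_sub_part_eq s s' F i : i < k -> F \subset gE (Gs i) ->
  {in gV (Gs i), s =1 s'} -> act_sub s F = act_sub s' F.
Proof.
move=> ik sFi ss'; apply: eq_in_imset => e eF; apply: eq_in_imset => v ve.
exact/ss'/(part_edge_sub Htc ik (subsetP sFi _ eF)).
Qed.

Lemma near_tree_bigcup j (Fs : nat -> {set {set V}}) : j < k ->
  (forall i, i < k -> tree_piece j i (Fs i)) -> near_tree G (\bigcup_(i < k) Fs i).
Proof.
move=> jk HFs; have := HFs j jk; rewrite /tree_piece eqxx => -[Tj [e [Tjsp [eTj FjE]]]].
pose Ts i := if i == j then Tj else Fs i.
have HTs i : i < k -> spanning_tree (Gs i) (Ts i).
  rewrite /Ts; case: eqP => [-> //|/eqP ij ik].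
  by have := HFs i ik; rewrite /tree_piece (negPf ij).
have ej : e \in gE (Gs j) by case: Tjsp => sTj _; apply: (subsetP sTj).
have eNi i f : i < k -> i != j -> f \in Ts i -> f != e.
  move=> ik ij fi; apply: contra_neq ij => fe; have [sTi _] := HTs i ik.
  by apply: (part_edge_uniq Htc Hser ik jk) ej; rewrite -fe (subsetP sTi).
exists (\bigcup_(i < k) Ts i), e; split; first exact: (spanning_tree_bigcup Htc Hser HG HTs).
split; first by apply/bigcupP; exists (Ordinal jk); rewrite /Ts ?eqxx.
apply/setP => f; rewrite in_setD1; apply/bigcupP/andP => [[i _ fi]|[fe /bigcupP [i _ fi]]].
  case: (eqVneq (val i) j) => [ij|ij].
    move: fi; rewrite ij FjE => /setD1P [fe fj]; split => //.
    by apply/bigcupP; exists (Ordinal jk); rewrite /Ts ?eqxx.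
  have fTi : f \in Ts i by rewrite /Ts (negPf ij).
  by split; [apply: eNi (ltn_ord i) ij fTi | apply/bigcupP; exists i].
exists i => //; move: fi; rewrite /Ts; case: eqP => [->|//].
by rewrite FjE in_setD1 fe.
Qed.

Lemma near_tree_split F : near_tree G F ->
  exists2 j, j < k & forall i, i < k -> tree_piece j i (F :&: gE (Gs i)).
Proof.
move=> [T [e [Tsp [eT ->]]]]; have [sTG _] := Tsp.
have [j jk ej] := edge_part HG (subsetP sTG _ eT).
exists j => // i ik; have Tisp := spanning_tree_restrict Htc Hser HG ik Tsp.
rewrite /tree_piece; case: eqP => [eij|/eqP ij].
  subst i; exists (T :&: gE (Gs j)), e; split => //; split; first by rewrite inE eT.
  by rewrite setIDAC.
suff -> : (T :\ e) :&: gE (Gs i) = T :&: gE (Gs i) by [].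
have eNi : e \notin gE (Gs i).
  by apply: contra ij => ei; rewrite (part_edge_uniq Htc Hser ik jk ei ej).
by apply/setP => f; rewrite !inE; case: eqP => [->|_] //=; rewrite (negPf eNi) andbF.
Qed.

End NearTrees.

Section Transversals.
Variables (V : finType) (G : graph V) (k : nat) (Gs : nat -> graph V) (xs : nat -> V).
Variables Ts Ns : nat -> {set {set V}} -> Prop.
Hypotheses (Htc : forall i, i < k -> terminal_connected (Gs i) (xs i) (xs i.+1))
  (Hser : serial_cond k Gs xs) (HG : graph_union G k Gs).
Hypotheses
  (HT : forall i, i < k ->
     orbit_transversal (Gs i) (xs i) (xs i.+1) (Ts i) (spanning_tree (Gs i)))
  (HN : forall i, i < k ->
     orbit_transversal (Gs i) (xs i) (xs i.+1) (Ns i) (near_tree (Gs i))).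
Implicit Types (F X Y : {set {set V}}) (s : {perm V}).

Definition piece_rep j i := if i == j then Ns i else Ts i.

Lemma piece_transversal j i : i < k ->
  orbit_transversal (Gs i) (xs i) (xs i.+1) (piece_rep j i) (tree_piece Gs j i).
Proof. by rewrite /piece_rep /tree_piece; case: eqP => _ ik; [apply: HN | apply: HT]. Qed.

Lemma piece_rep_tree j i F : i < k -> piece_rep j i F -> tree_piece Gs j i F.
Proof. by move=> ik; apply: (piece_transversal j ik).1. Qed.

Lemma tree_piece_sub j i F : tree_piece Gs j i F -> F \subset gE (Gs i).
Proof. by rewrite /tree_piece; case: eqP => _; [apply: near_tree_sub | case]. Qed.

Lemma combined_piece_rep j (Fs : nat -> {set {set V}}) : Ns j (Fs j) ->
  (forall i, i < k -> i <> j -> Ts i (Fs i)) -> forall i, i < k -> piece_rep j i (Fs i).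
Proof. by move=> NFj TFs i ik; rewrite /piece_rep; case: eqP => [-> //|]; apply: TFs. Qed.

Lemma combined_near_tree X : combined k Ts Ns X -> near_tree G X.
Proof.
case=> j [Fs [jk [NFj [TFs ->]]]]; apply: (near_tree_bigcup Htc Hser HG jk) => i ik.
exact/(piece_rep_tree ik)/(combined_piece_rep NFj TFs).
Qed.

Lemma combined_setI X : combined k Ts Ns X ->
  exists2 j, j < k & forall i, i < k -> piece_rep j i (X :&: gE (Gs i)).
Proof.
case=> j [Fs [jk [NFj [TFs ->]]]]; exists j => // i ik.
have PFs := combined_piece_rep NFj TFs.
rewrite (setI_bigcup_part Htc Hser) //; first exact: PFs.
by move=> l lk; apply/tree_piece_sub/(piece_rep_tree lk)/PFs.
Qed.

Section Orbit.
Variables (F : {set {set V}}) (j : nat).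
Hypotheses (sFG : F \subset gE G) (jk : j < k)
  (HF : forall i, i < k -> tree_piece Gs j i (F :&: gE (Gs i))).

Lemma combined_orbit_piece X s : combined k Ts Ns X -> aut_or G (xs 0) (xs k) s ->
  X = act_sub s F -> forall i, i < k ->
  piece_rep j i (X :&: gE (Gs i)) /\
  same_orbit (Gs i) (xs i) (xs i.+1) (X :&: gE (Gs i)) (F :&: gE (Gs i)).
Proof.
move=> cX Hs XsF; have [j' j'k Hj'] := combined_setI cX.
have Xi i : i < k -> X :&: gE (Gs i) = act_sub s (F :&: gE (Gs i)).
  by move=> ik; rewrite XsF (act_sub_setI_part Htc Hser HG Hs sFG ik).
suff ej : j' = j.
  move=> i ik; rewrite -ej; split; first exact: Hj'.
  by exists s; split; [apply: (aut_restrict Htc Hser HG Hs ik) | apply: Xi].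
case: (eqVneq j' j) => // j'j; exfalso.
have := piece_rep_tree j'k (Hj' j' j'k); rewrite /tree_piece eqxx => near_j'.
have := HF j'k; rewrite /tree_piece (negPf j'j).
move/(spanning_tree_act (aut_restrict Htc Hser HG Hs j'k)).
by rewrite -Xi //; apply: (near_tree_not_spanning (Htc j'k) near_j').
Qed.

Lemma combined_orbit_uniq Y1 Y2 :
  combined k Ts Ns Y1 -> same_orbit G (xs 0) (xs k) Y1 F ->
  combined k Ts Ns Y2 -> same_orbit G (xs 0) (xs k) Y2 F -> Y1 = Y2.
Proof.
move=> cY1 [s1 [Hs1 Y1F]] cY2 [s2 [Hs2 Y2F]].
rewrite (bigcup_setI_part HG (near_tree_sub (combined_near_tree cY1))).
rewrite (bigcup_setI_part HG (near_tree_sub (combined_near_tree cY2))).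
apply: eq_bigr => i _; have ik := ltn_ord i.
have [P1 O1] := combined_orbit_piece cY1 Hs1 Y1F ik.
have [P2 O2] := combined_orbit_piece cY2 Hs2 Y2F ik.
exact: transversal_uniq (piece_transversal j ik) (HF ik) P1 O1 P2 O2.
Qed.

Lemma combined_orbit_exists :
  exists X, combined k Ts Ns X /\ same_orbit G (xs 0) (xs k) X F.
Proof.
pose R i (p : {set {set V}} * {perm V}) := [/\ piece_rep j i p.1,
  aut_or (Gs i) (xs i) (xs i.+1) p.2 & p.1 = act_sub p.2 (F :&: gE (Gs i))].
have [rep Hrep] : exists rep, forall i, i < k -> R i (rep i).
  apply: (bounded_choice (set0, 1%g)) => i ik.
  have [X [[PX [s [Hs XsF]]] _]] := (piece_transversal j ik).2 _ (HF ik).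
  by exists (X, s).
have Hss i : i < k -> aut_or (Gs i) (xs i) (xs i.+1) (rep i).2 by case/Hrep.
have [s [Hs s_part]] := aut_glue Htc Hser HG (ltac:(lia) : 0 < k) Hss.
exists (\bigcup_(i < k) (rep i).1); split.
  exists j, (fun i => (rep i).1); do !split => //.
    by have [] := Hrep j jk; rewrite /piece_rep eqxx.
  by move=> i ik ij; have [] := Hrep i ik; rewrite /piece_rep; case: eqP.
exists s; split => //; rewrite (bigcup_setI_part HG sFG) act_sub_bigcup.
apply: eq_bigr => i _; have ik := ltn_ord i; have [_ _ ->] := Hrep i ik.
by apply/esym/(act_sub_part_eq Htc ik) => [|v vi]; [apply: subsetIr | apply: s_part].
Qed.

End Orbit.

End Transversals.

Theorem theorem5p5 (V : finType) (G : graph V) (s t : V) (k : nat)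
    (Gs : nat -> graph V) (xs : nat -> V)
    (Ts Ns : nat -> {set {set V}} -> Prop) :
  2 <= k -> xs 0 = s -> xs k = t ->
  (forall i, i < k -> osp (Gs i) (xs i) (xs i.+1)) ->
  serial_cond k Gs xs -> graph_union G k Gs ->
  (forall i, i < k -> ~ is_parallel (Gs i) (xs i) (xs i.+1)) ->
  (forall i, i < k ->
     orbit_transversal (Gs i) (xs i) (xs i.+1) (Ts i) (spanning_tree (Gs i))) ->
  (forall i, i < k ->
     orbit_transversal (Gs i) (xs i) (xs i.+1) (Ns i) (near_tree (Gs i))) ->
  orbit_transversal G s t (combined k Ts Ns) (near_tree G).
Proof.
move=> k2 <- <- Hosp Hser HG _ HT HN.
have Htc i : i < k -> terminal_connected (Gs i) (xs i) (xs i.+1).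
  by move=> ik; apply/osp_terminal_connected/Hosp.
split; first exact: combined_near_tree Htc Hser HG HT HN.
move=> F nF; have [j jk HF] := near_tree_split Htc Hser HG nF.
have sFG := near_tree_sub nF.
have [X [cX oX]] := combined_orbit_exists Htc Hser HG HT HN sFG jk HF.
exists X; split => // Y [cY oY].
exact: (combined_orbit_uniq Htc Hser HG HT HN sFG HF cX oX cY oY).
Qed.
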